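(* Consider Algorithm 3 (described in the context) under the Standing Assumption and Matrix Assumption of the context. There exists a constant $\xi_{\min}>0$, independent of the run, such that in any run of the algorithm there exist $\bar k_\xi\in\mathbb{N}$ and $\bar\xi_{\min}\in[\xi_{\min},\bar\xi_{-1}]$ with $\bar\xi_k=\bar\xi_{\min}$ for all $k\ge\bar k_\xi$.
   Context: Problem: $\min_x f(x)$ s.t. $c(x)=0$, $f(x)=\mathbb{E}[F(x,\omega)]$, $c:\mathbb{R}^n\to\mathbb{R}^m$ deterministic. Notation: $g_k=\nabla f(x_k)$, $c_k=c(x_k)$, $J_k=\nabla c(x_k)^T$; $\Delta q(x,\tau,g,H,d)=-\tau(g^Td+\frac12\max\{d^THd,0\})+\|c(x)\|_1$. Standing Assumption: an open convex set $\mathcal X$ contains all iterates; $f$ is $C^1$, bounded below on $\mathcal X$, $\nabla f$ bounded and $L$-Lipschitz on $\mathcal X$; $c$, $\nabla c^T$ bounded on $\mathcal X$; $\nabla c_i$ is $\gamma_i$-Lipschitz on $\mathcal X$; singular values of $\nabla c(x)^T$ bounded away from zero uniformly over $\mathcal X$; $\Gamma:=\sum_i\gamma_i$. Matrix Assumption: deterministic symmetric $H_k$ with $\|H_k\|_2\le\kappa_H$ and $u^TH_ku\ge\zeta\|u\|_2^2$ whenever $J_ku=0$. Algorithm 3 (inputs $x_0$, $\bar\tau_{-1}>0$, $\epsilon,\sigma\in(0,1)$, $\bar\xi_{-1}>0$, $\{\beta_k\}\subset(0,1]$, $\theta\ge0$): at iteration $k$, obtain stochastic gradient $\bar g_k$;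 $(\bar d_k,\bar y_k)$ solves $H_k\bar d_k+J_k^T\bar y_k=-\bar g_k$, $J_k\bar d_k=-c_k$ (assumed $\bar d_k\neq0$). $\bar\tau_k^{trial}=\infty$ if $\bar g_k^T\bar d_k+\max\{\bar d_k^TH_k\bar d_k,0\}\le0$, else $\frac{(1-\sigma)\|c_k\|_1}{\bar g_k^T\bar d_k+\max\{\bar d_k^TH_k\bar d_k,0\}}$; $\bar\tau_k=\bar\tau_{k-1}$ if $\bar\tau_{k-1}\le\bar\tau_k^{trial}$, else $(1-\epsilon)\bar\tau_k^{trial}$. $\bar\xi_k^{trial}=\frac{\Delta q(x_k,\bar\tau_k,\bar g_k,H_k,\bar d_k)}{\bar\tau_k\|\bar d_k\|_2^2}$; $\bar\xi_k=\bar\xi_{k-1}$ if $\bar\xi_{k-1}\le\bar\xi_k^{trial}$, else $(1-\epsilon)\bar\xi_k^{trial}$. With $D_k=(\bar\tau_kL+\Gamma)\|\bar d_k\|_2^2$, $\hat a_k=\beta_k\Delta q(x_k,\bar\tau_k,\bar g_k,H_k,\bar d_k)/D_k$, $\tilde a_k=\hat a_k-4\|c_k\|_1/D_k$, project both onto $[a_k,a_k+\theta\beta_k^2]$ with $a_k=\frac{\beta_k\bar\xi_k\bar\tau_k}{\bar\tau_kL+\Gamma}$ to get $\widehat\alpha_k,\widetilde\alpha_k$; $\bar\alpha_k=\widehat\alpha_k$ if $\widehat\alpha_k<1$, $1$ if $\widetilde\alpha_k\le1\le\widehat\alpha_k$, $\widetilde\alpha_k$ if $\widetilde\alpha_k>1$;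 $x_{k+1}=x_k+\bar\alpha_k\bar d_k$. *)

From HB Require Import structures.
From mathcomp Require Import all_boot all_order all_algebra.
From mathcomp Require Import all_classical all_reals all_analysis.
Set Implicit Arguments. Unset Strict Implicit. Unset Printing Implicit Defensive.
Import Order.TTheory GRing.Theory Num.Theory.
Import numFieldNormedType.Exports.
Local Open Scope classical_set_scope.
Local Open Scope ring_scope.

Section Defs.
Variable R : realType.

Definition norm2 (p q : nat) (A : 'M[R]_(p, q)) : R :=
  Num.sqrt (\sum_(i < p) \sum_(j < q) (A i j) ^+ 2).

Definition norm1 (p : nat) (v : 'cV[R]_p) : R := \sum_(i < p) `|v i 0|.

Definition dotv (p : nat) (u v : 'cV[R]_p) : R := (u^T *m v) 0 0.

Definition quadf (p : nat) (H : 'M[R]_p) (d : 'cV[R]_p) : R := (d^T *m H *m d) 0 0.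

Definition Delta_q (n m : nat) (c : 'cV[R]_n -> 'cV[R]_m) (x : 'cV[R]_n) (tau : R)
  (g : 'cV[R]_n) (H : 'M[R]_n) (d : 'cV[R]_n) : R :=
  - tau * (dotv g d + 2^-1 * Num.max (quadf H d) 0) + norm1 (c x).

(* merit-parameter trial value; None encodes +infinity *)
Definition tau_trial (n m : nat) (c : 'cV[R]_n -> 'cV[R]_m) (sigma : R) (x : 'cV[R]_n)
  (g : 'cV[R]_n) (H : 'M[R]_n) (d : 'cV[R]_n) : option R :=
  let den := dotv g d + Num.max (quadf H d) 0 in
  if den <= 0 then None else Some ((1 - sigma) * norm1 (c x) / den).

Definition tau_update (eps tau_prev : R) (tr : option R) : R :=
  match tr with
  | None => tau_prev
  | Some t => if tau_prev <= t then tau_prev else (1 - eps) * t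
  end.

Definition xi_update (eps xi_prev xi_tr : R) : R :=
  if xi_prev <= xi_tr then xi_prev else (1 - eps) * xi_tr.

Definition proj_int (lo hi v : R) : R := Num.min (Num.max v lo) hi.

(* value at iteration k-1, with value v_m1 at index -1 *)
Definition prev (v_m1 : R) (v : nat -> R) (k : nat) : R :=
  if k is k'.+1 then v k' else v_m1.

Definition alg3_run (n m : nat) (c : 'cV[R]_n -> 'cV[R]_m) (J : 'cV[R]_n -> 'M[R]_(m, n))
  (L Gamma : R) (tau_m1 eps sigma xi_m1 theta : R) (beta : nat -> R)
  (gb : nat -> 'cV[R]_n) (H : nat -> 'M[R]_n)
  (x d : nat -> 'cV[R]_n) (y : nat -> 'cV[R]_m) (tau xi alpha : nat -> R) : Prop :=
  forall k : nat,
    H k *m d k + (J (x k))^T *m y k = - gb k /\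
        J (x k) *m d k = - c (x k) /\
        tau k = tau_update eps (prev tau_m1 tau k) (tau_trial c sigma (x k) (gb k) (H k) (d k)) /\
        xi k = xi_update eps (prev xi_m1 xi k)
                 (Delta_q c (x k) (tau k) (gb k) (H k) (d k) / (tau k * norm2 (d k) ^+ 2)) /\
        (let Dk := (tau k * L + Gamma) * norm2 (d k) ^+ 2 in
        let ahat := beta k * Delta_q c (x k) (tau k) (gb k) (H k) (d k) / Dk in
        let atil := ahat - 4 * norm1 (c (x k)) / Dk in
        let ak := beta k * xi k * tau k / (tau k * L + Gamma) in
        let alhat := proj_int ak (ak + theta * beta k ^+ 2) ahat in
        let altil := proj_int ak (ak + theta * beta k ^+ 2) atil in
        alpha k = (if alhat < 1 then alhat else if altil <= 1 then 1 else altil)) /\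
        x k.+1 = x k + alpha k *: d k.

End Defs.

From Pilot Require Import Defs.
From HB Require Import structures.
From mathcomp Require Import all_boot all_order all_algebra.
From mathcomp Require Import all_classical all_reals all_analysis.
From mathcomp Require Import ring lra.
Import Order.TTheory GRing.Theory Num.Theory.
Import numFieldNormedType.Exports.

(* The merit parameter stays positive and nonincreasing, and by its choice the model
   reduction satisfies Delta_q >= tau max(d'Hd, 0)/2 + sigma |c|_1.  Splitting the
   step d = u + v into a null-space part u of J and the minimum-norm solution v of
   J v = -c, with |v|^2 = O(|c|_1), gives |d|^2 <= (4/zeta) max(d'Hd, 0) + S |c|_1 for
   a constant S depending only on the problem data.  Hence the trial ratio
   Delta_q / (tau |d|^2) has a run-independent positive lower bound, so xi stays above
   min(xi_{-1}, (1 - eps) times that bound); as every change of xi shrinks it by the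
   factor 1 - eps, it can change only finitely often. *)

Set Implicit Arguments. Unset Strict Implicit. Unset Printing Implicit Defensive.
Local Open Scope classical_set_scope.
Local Open Scope ring_scope.

Lemma nonincreasing_gap_eventually_const (R : realType) (u : R ^nat) (delta : R) :
  0 < delta -> has_lbound (range u) -> (forall k, u k.+1 <= u k) ->
  (forall k, u k.+1 != u k -> u k.+1 <= u k - delta) ->
  exists N, forall k, (N <= k)%N -> u k = u N.
Proof.
move=> delta_gt0 u_lb u_dec u_gap.
have u_ni : nonincreasing_seq u by apply/nonincreasing_seqP.
have u_cvg := nonincreasing_is_cvgn u_ni u_lb.
have lim_le := nonincreasing_cvgn_ge u_ni u_cvg.
have [N _ u_near] := (cvgrPdist_lt _ _).1 u_cvg delta delta_gt0.
have u_stable k : (N <= k)%N -> u k.+1 = u k.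
  move=> Nk; apply/eqP/negPn/negP => /u_gap; have := u_near k Nk.
  rewrite ltr_distlC => /andP[_]; have := lim_le k.+1; lra.
exists N => k /subnKC <-; elim: (_ - N)%N => [|j IHj]; first by rewrite addn0.
by rewrite addnS u_stable ?leq_addr.
Qed.

Section ColumnVectors.
Variable R : realType.
Implicit Types (p q : nat).

Lemma dotvE p (u v : 'cV[R]_p) : dotv u v = \sum_i u i 0 * v i 0.
Proof. by rewrite /dotv mxE; apply: eq_bigr => i _; rewrite mxE. Qed.

Lemma dotvC p (u v : 'cV[R]_p) : dotv u v = dotv v u.
Proof. by rewrite !dotvE; apply: eq_bigr => i _; rewrite mulrC. Qed.

Lemma dotvDr p (u v w : 'cV[R]_p) : dotv u (v + w) = dotv u v + dotv u w.
Proof. by rewrite !dotvE -big_split; apply: eq_bigr => i _; rewrite mxE mulrDr. Qed.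

Lemma dotvDl p (u v w : 'cV[R]_p) : dotv (v + w) u = dotv v u + dotv w u.
Proof. by rewrite dotvC dotvDr !(dotvC u). Qed.

Lemma dotvNl p (u v : 'cV[R]_p) : dotv (- u) v = - dotv u v.
Proof. by rewrite !dotvE -sumrN; apply: eq_bigr => i _; rewrite mxE mulNr. Qed.

Lemma dotvNr p (u v : 'cV[R]_p) : dotv u (- v) = - dotv u v.
Proof. by rewrite dotvC dotvNl dotvC. Qed.

Lemma dotv0r p (u : 'cV[R]_p) : dotv u 0 = 0.
Proof. by rewrite dotvE big1 // => i _; rewrite mxE mulr0. Qed.

Lemma dotv_trmx_mul p q (A : 'M[R]_(p, q)) (u : 'cV[R]_p) (v : 'cV[R]_q) :
  dotv (A^T *m u) v = dotv u (A *m v).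
Proof. by rewrite /dotv trmx_mul trmxK mulmxA. Qed.

Lemma dotv_sym_mul p (A : 'M[R]_p) (u v : 'cV[R]_p) :
  A^T = A -> dotv v (A *m u) = dotv u (A *m v).
Proof. by move=> A_sym; rewrite -dotv_trmx_mul A_sym dotvC. Qed.

Lemma quadfE p (A : 'M[R]_p) (u : 'cV[R]_p) : quadf A u = dotv u (A *m u).
Proof. by rewrite /quadf /dotv mulmxA. Qed.

Lemma dotvv_ge0 p (u : 'cV[R]_p) : 0 <= dotv u u.
Proof. by rewrite dotvE; apply: sumr_ge0 => i _; rewrite -expr2 sqr_ge0. Qed.

Lemma dotvv_eq0 p (u : 'cV[R]_p) : (dotv u u == 0) = (u == 0).
Proof.
apply/eqP/eqP => [|->]; last by rewrite dotv0r.
rewrite dotvE => /psumr_eq0P u0; apply/matrixP => i j; rewrite (ord1 j) mxE.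
by apply/eqP; rewrite -sqrf_eq0 expr2 u0 // => k _; rewrite -expr2 sqr_ge0.
Qed.

Lemma dotvv_gt0 p (u : 'cV[R]_p) : u != 0 -> 0 < dotv u u.
Proof. by move=> u_neq0; rewrite lt_def dotvv_eq0 u_neq0 dotvv_ge0. Qed.

Lemma norm2_ge0 p q (A : 'M[R]_(p, q)) : 0 <= norm2 A.
Proof. exact: sqrtr_ge0. Qed.

Lemma norm2_sqr p (u : 'cV[R]_p) : norm2 u ^+ 2 = dotv u u.
Proof.
rewrite /norm2 sqr_sqrtr; last by do 2![apply: sumr_ge0 => ? _]; rewrite sqr_ge0.
by rewrite dotvE; apply: eq_bigr => i _; rewrite big_ord1 expr2.
Qed.

Lemma dotv_amgm p (u v : 'cV[R]_p) (s : R) :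
  0 < s -> 2 * dotv u v <= s * dotv u u + dotv v v / s.
Proof.
move=> s_gt0; rewrite !dotvE !mulr_sumr mulr_suml -big_split /=.
apply: ler_sum => i _; set a := u i 0; set b := v i 0.
have : 0 <= (s * a - b) ^+ 2 / s by rewrite divr_ge0 ?sqr_ge0 ?ltW.
have -> : (s * a - b) ^+ 2 / s = s * (a * a) + b * b / s - 2 * (a * b).
  by field; rewrite gt_eqF.
by rewrite subr_ge0.
Qed.

Lemma dotvvD_le p (u v : 'cV[R]_p) :
  dotv (u + v) (u + v) <= 2 * dotv u u + 2 * dotv v v.
Proof.
have := dotv_amgm u v ltr01; rewrite divr1 mul1r dotvDl !dotvDr (dotvC v u).
lra.
Qed.

Lemma norm1_ge0 p (u : 'cV[R]_p) : 0 <= norm1 u.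
Proof. exact: sumr_ge0. Qed.

Lemma norm1_eq0 p (u : 'cV[R]_p) : norm1 u = 0 -> u = 0.
Proof.
move=> /psumr_eq0P u0; apply/matrixP => i j; rewrite (ord1 j) mxE.
by apply/eqP/normr0P; apply: u0.
Qed.

Lemma dotvv_le_norm2_norm1 p (u : 'cV[R]_p) : dotv u u <= norm2 u * norm1 u.
Proof.
rewrite dotvE /norm1 mulr_sumr; apply: ler_sum => i _.
rewrite (le_trans (ler_norm _)) // normrM ler_wpM2r //.
have : `|u i 0| ^+ 2 <= norm2 u ^+ 2.
  rewrite norm2_sqr real_normK ?num_real // dotvE (bigD1 i) //= expr2 lerDl.
  by apply: sumr_ge0 => j _; rewrite -expr2 sqr_ge0.
by rewrite ler_pXn2r // ?nnegrE ?norm2_ge0.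
Qed.

Lemma bounded_right_inverse m n (J : 'M[R]_(m, n)) (smin : R) :
  0 < smin -> (forall w : 'cV[R]_m, smin * norm2 w <= norm2 (J^T *m w)) ->
  forall b : 'cV[R]_m, exists v : 'cV[R]_n,
    J *m v = b /\ smin ^+ 2 * dotv v v <= dotv b b.
Proof.
move=> smin_gt0 J_sing b.
(* v := J^T w with w := (J J^T)^-1 b; then |v|^2 = w'b, and AM-GM with weight smin^2
   turns smin^2 |w|^2 <= |v|^2 into the bound. *)
have J_sing2 w : smin ^+ 2 * dotv w w <= dotv (J^T *m w) (J^T *m w).
  rewrite -!norm2_sqr -exprMn ler_pXn2r ?nnegrE ?norm2_ge0 ?J_sing //.
  by rewrite mulr_ge0 ?norm2_ge0 ?ltW.
set A := J *m J^T.
have A_inj : forall w : 'cV[R]_m, A *m w = 0 -> w = 0.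
  move=> w Aw0; apply/eqP; rewrite -dotvv_eq0 eq_le dotvv_ge0 andbT.
  rewrite -(pmulr_rle0 _ (exprn_gt0 2 smin_gt0)) (le_trans (J_sing2 w)) //.
  by rewrite dotv_trmx_mul mulmxA Aw0 dotv0r.
have A_unit : A \in unitmx.
  rewrite -row_free_unit; apply: inj_row_free => r rA0; apply: trmx_inj.
  by rewrite trmx0; apply: A_inj; move/(congr1 trmx): rA0; rewrite !trmx_mul trmxK trmx0.
set w := invmx A *m b.
have Aw : A *m w = b by rewrite /w mulKVmx.
exists (J^T *m w); split; first by rewrite mulmxA.
have vv : dotv (J^T *m w) (J^T *m w) = dotv w b by rewrite dotv_trmx_mul mulmxA Aw.
have s2_gt0 : 0 < smin ^+ 2 := exprn_gt0 2 smin_gt0.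
have := dotv_amgm w b s2_gt0; have := J_sing2 w; rewrite vv.
by move=> ? ?; rewrite -ler_pdivlMl // mulrC; lra.
Qed.

End ColumnVectors.

(* [cross_const] absorbs the cross terms 2 u'Hv and v'Hv of [quadf H (u + v)] by
   AM-GM; [step_const] adds the bound smin^2 |v|^2 <= Bc |c|_1 on the range part. *)
Definition cross_const (R : realType) (kap zeta : R) : R :=
  2 * kap ^+ 2 / zeta + (1 + kap ^+ 2) / 2.

Definition step_const (R : realType) (kap zeta smin Bc : R) : R :=
  (4 * cross_const kap zeta / zeta + 2) * Bc / smin ^+ 2.

Lemma cross_const_ge0 (R : realType) (kap zeta : R) :
  0 < zeta -> 0 <= cross_const kap zeta.
Proof.
move=> zeta_gt0; have k2 := sqr_ge0 kap; have z := ltW zeta_gt0.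
by apply: addr_ge0; apply: divr_ge0 => //; [apply: mulr_ge0 | apply: addr_ge0].
Qed.

Lemma step_const_ge0 (R : realType) (kap zeta smin Bc : R) :
  0 < zeta -> 0 <= Bc -> 0 <= step_const kap zeta smin Bc.
Proof.
move=> zeta_gt0 Bc_ge0; apply: divr_ge0; last exact: sqr_ge0.
apply: mulr_ge0 => //; apply: addr_ge0 => //; apply: divr_ge0; last exact: ltW.
exact: mulr_ge0 (cross_const_ge0 kap zeta_gt0).
Qed.

Section NullspaceCurvature.
Variables (R : realType) (m n : nat) (J : 'M[R]_(m, n)) (H : 'M[R]_n) (kap zeta : R).
Hypotheses (H_sym : H^T = H)
  (H_bounded : forall u : 'cV[R]_n, norm2 (H *m u) <= kap * norm2 u)
  (H_null_pd : forall u : 'cV[R]_n, J *m u = 0 -> zeta * norm2 u ^+ 2 <= quadf H u)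
  (zeta_gt0 : 0 < zeta).

Lemma dotv_mulmx_le (u : 'cV[R]_n) :
  dotv (H *m u) (H *m u) <= kap ^+ 2 * dotv u u.
Proof.
rewrite -!norm2_sqr -exprMn ler_pXn2r ?nnegrE ?norm2_ge0 ?H_bounded //.
exact: le_trans (norm2_ge0 _) (H_bounded u).
Qed.

Lemma quadf_null_addr_ge (u v : 'cV[R]_n) : J *m u = 0 ->
  zeta / 2 * dotv u u - cross_const kap zeta * dotv v v <= quadf H (u + v).
Proof.
move=> Ju0; have := H_null_pd Ju0; rewrite norm2_sqr quadfE => uHu.
have -> : quadf H (u + v) =
    dotv u (H *m u) + 2 * dotv u (H *m v) + dotv v (H *m v).
  by rewrite quadfE mulmxDr !dotvDl !dotvDr (dotv_sym_mul _ _ H_sym); ring.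
have zeta2_gt0 : 0 < zeta / 2 by rewrite divr_gt0.
have cross_u := dotv_amgm (- u) (H *m v) zeta2_gt0.
have cross_v := dotv_amgm (- v) (H *m v) ltr01.
rewrite !dotvNl !dotvNr !opprK in cross_u cross_v.
rewrite invf_div in cross_u; rewrite divr1 mul1r in cross_v.
have Hv := dotv_mulmx_le v.
have Hv_scaled : 2 / zeta * dotv (H *m v) (H *m v) <= 2 / zeta * (kap ^+ 2 * dotv v v).
  by rewrite ler_wpM2l // divr_ge0 // ltW.
by rewrite /cross_const; lra.
Qed.

Variable smin : R.
Hypotheses (smin_gt0 : 0 < smin)
  (J_sing : forall w : 'cV[R]_m, smin * norm2 w <= norm2 (J^T *m w)).

Lemma step_sqnorm_le (d : 'cV[R]_n) (b : 'cV[R]_m) (Bc : R) :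
  J *m d = - b -> norm2 b <= Bc ->
  dotv d d <= 4 / zeta * Num.max (quadf H d) 0 + step_const kap zeta smin Bc * norm1 b.
Proof.
move=> Jd b_le.
have [v [Jv vv_le]] := bounded_right_inverse smin_gt0 J_sing b.
have Ju : J *m (d + v) = 0 by rewrite mulmxDr Jd Jv addNr.
have dd_le := dotvvD_le (d + v) (- v).
have Q_ge := quadf_null_addr_ge (- v) Ju.
rewrite addrK dotvNl dotvNr opprK in dd_le Q_ge.
have zeta4_ge0 : 0 <= 4 / zeta by rewrite divr_ge0 // ltW.
have uu_le : 2 * dotv (d + v) (d + v) <=
    4 / zeta * quadf H d + 4 / zeta * cross_const kap zeta * dotv v v.
  have := ler_wpM2l zeta4_ge0 Q_ge.
  rewrite mulrBr mulrA (_ : 4 / zeta * (zeta / 2) = 2); first lra.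
  by field; rewrite gt_eqF.
have vv_le' : (4 * cross_const kap zeta / zeta + 2) * dotv v v <=
    step_const kap zeta smin Bc * norm1 b.
  rewrite [leRHS](_ : _ = (4 * cross_const kap zeta / zeta + 2)
      * (Bc * norm1 b / smin ^+ 2)); last by rewrite /step_const; ring.
  apply: ler_wpM2l.
    apply: addr_ge0 => //; apply: divr_ge0; last exact: ltW.
    exact: mulr_ge0 (cross_const_ge0 kap zeta_gt0).
  rewrite ler_pdivlMr ?exprn_gt0 // mulrC (le_trans vv_le) //.
  by rewrite (le_trans (dotvv_le_norm2_norm1 b)) // ler_wpM2r ?norm1_ge0.
have Q_le : 4 / zeta * quadf H d <= 4 / zeta * Num.max (quadf H d) 0.
  by rewrite ler_wpM2l // le_max lexx.
lra.
Qed.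

End NullspaceCurvature.

Section ParameterUpdates.
Variables (R : realType) (eps : R).
Hypothesis eps_in : 0 < eps < 1.

Section TauUpdate.
Variables (tau_prev : R) (tr : option R).
Hypotheses (tau_prev_gt0 : 0 < tau_prev) (trial_gt0 : forall t, tr = Some t -> 0 < t).

Lemma tau_update_gt0 : 0 < tau_update eps tau_prev tr.
Proof.
case: tr trial_gt0 => [t /(_ t erefl) t_gt0|_] //=; case: ifP => // _.
by case/andP: eps_in => _ eps_lt1; rewrite mulr_gt0 // subr_gt0.
Qed.

Lemma tau_update_le_prev : tau_update eps tau_prev tr <= tau_prev.
Proof.
case: tr trial_gt0 => [t /(_ t erefl) t_gt0|_] //=; case: ifP => // /negbT.
by case/andP: eps_in; rewrite -ltNge; nra.
Qed.

Lemma tau_update_le_trial t : tr = Some t -> tau_update eps tau_prev tr <= t.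
Proof.
move=> tr_t; have := trial_gt0 tr_t; rewrite tr_t /=; case: ifP => // _.
by case/andP: eps_in; nra.
Qed.

End TauUpdate.

Lemma xi_update_le (xi_prev tr : R) : 0 <= tr -> xi_update eps xi_prev tr <= xi_prev.
Proof.
rewrite /xi_update; case: ifP => // /negbT; rewrite -ltNge.
by case/andP: eps_in; nra.
Qed.

Lemma xi_update_ge (lo xi_prev tr : R) :
  lo <= xi_prev -> lo <= (1 - eps) * tr -> lo <= xi_update eps xi_prev tr.
Proof. by rewrite /xi_update; case: ifP. Qed.

Lemma xi_update_decrease (xi_prev tr : R) : xi_update eps xi_prev tr != xi_prev ->
  xi_update eps xi_prev tr <= (1 - eps) * xi_prev.
Proof.
rewrite /xi_update; case: ifP => [_|/negbT]; first by rewrite eqxx.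
by rewrite -ltNge => tr_lt _; case/andP: eps_in => _ /ltW; rewrite -subr_ge0; nra.
Qed.

Lemma xi_update_seq_eventually_const (xi_m1 lb : R) (xi tr : nat -> R) :
  0 < xi_m1 -> 0 < lb -> (forall k, lb <= tr k) ->
  (forall k, xi k = xi_update eps (Defs.prev xi_m1 xi k) (tr k)) ->
  exists kxi, Num.min xi_m1 ((1 - eps) * lb) <= xi kxi <= xi_m1 /\
    forall k, (kxi <= k)%N -> xi k = xi kxi.
Proof.
move=> xi_m1_gt0 lb_gt0 tr_ge xi_rec.
set xi_min := Num.min xi_m1 ((1 - eps) * lb).
have [eps_gt0 eps_lt1] := andP eps_in.
have xi_le_prev k : xi k <= Defs.prev xi_m1 xi k.
  by rewrite xi_rec xi_update_le // (le_trans (ltW lb_gt0)).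
have xi_min_le k : xi_min <= (1 - eps) * tr k.
  by rewrite ge_min ler_wpM2l ?orbT // subr_ge0 ltW.
have xi_ge k : xi_min <= xi k.
  by elim: k => [|k IHk]; rewrite xi_rec xi_update_ge // ge_min lexx.
have xi_le_m1 k : xi k <= xi_m1.
  by elim: k => [|k IHk]; rewrite (le_trans (xi_le_prev _)).
have [kxi xi_const] : exists kxi, forall k, (kxi <= k)%N -> xi k = xi kxi.
  apply: (@nonincreasing_gap_eventually_const _ _ (eps * xi_min)).
  - by rewrite mulr_gt0 // lt_min xi_m1_gt0 mulr_gt0 // subr_gt0.
  - by exists xi_min => _ [k _ <-].
  - by move=> k; apply: (xi_le_prev k.+1).
  - move=> k; rewrite [xi k.+1]xi_rec => /xi_update_decrease; rewrite -xi_rec /=.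
    by have := xi_ge k; nra.
by exists kxi; rewrite xi_ge xi_le_m1.
Qed.

End ParameterUpdates.

Lemma Delta_q_ge_of_le_trial (R : realType) n m (c : 'cV[R]_n -> 'cV[R]_m)
    (sigma : R) x g H d (tau : R) :
  0 <= tau -> sigma <= 1 ->
  (forall t, tau_trial c sigma x g H d = Some t -> tau <= t) ->
  tau * Num.max (quadf H d) 0 / 2 + sigma * norm1 (c x) <= Delta_q c x tau g H d.
Proof.
rewrite /Delta_q /tau_trial => tau_ge0 sigma_le1.
have C_ge0 := norm1_ge0 (c x).
case: ifP => [den_le0 _|/negbT]; first by nra.
by rewrite -ltNge => den_gt0 /(_ _ erefl); rewrite ler_pdivlMr //; nra.
Qed.

Lemma tau_trial_gt0 (R : realType) n m (c : 'cV[R]_n -> 'cV[R]_m) (J : 'M[R]_(m, n))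
    (sigma : R) x g H d y t :
  H *m d + J^T *m y = - g -> J *m d = - c x ->
  (forall u, J *m u = 0 -> 0 <= quadf H u) -> sigma < 1 ->
  tau_trial c sigma x g H d = Some t -> 0 < t.
Proof.
move=> dual primal null_psd sigma_lt1; rewrite /tau_trial.
case: ifP => // /negbT; rewrite -ltNge => den_gt0 [<-].
rewrite divr_gt0 // mulr_gt0 ?subr_gt0 // lt_def norm1_ge0 andbT.
apply/eqP => /norm1_eq0 cx0.
have Jd0 : J *m d = 0 by rewrite primal cx0 oppr0.
have gd : dotv g d = - quadf H d.
  by rewrite -[g]opprK -dual dotvNl dotvDl dotv_trmx_mul Jd0 dotv0r addr0 quadfE dotvC.
by move: den_gt0; rewrite gd max_l ?null_psd // addNr ltxx.
Qed.

Definition xi_trial_lb (R : realType) (kap zeta smin Bc tau_m1 sigma : R) : R :=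
  (8 / zeta + step_const kap zeta smin Bc * tau_m1 / sigma)^-1.

Lemma xi_trial_lb_gt0 (R : realType) (kap zeta smin Bc tau_m1 sigma : R) :
  0 < zeta -> 0 <= Bc -> 0 <= tau_m1 -> 0 < sigma ->
  0 < xi_trial_lb kap zeta smin Bc tau_m1 sigma.
Proof.
move=> zeta_gt0 Bc_ge0 tau_m1_ge0 sigma_gt0; rewrite invr_gt0.
have : 0 < 8 / zeta by rewrite divr_gt0.
have : 0 <= step_const kap zeta smin Bc * tau_m1 / sigma.
  by apply: divr_ge0; [apply: mulr_ge0 => //; apply: step_const_ge0 | apply: ltW].
lra.
Qed.

Section Algorithm3Run.
Variables (R : realType) (n m : nat) (c : 'cV[R]_n -> 'cV[R]_m)
  (J : 'cV[R]_n -> 'M[R]_(m, n)) (L Gamma tau_m1 eps sigma xi_m1 theta : R)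
  (beta : nat -> R) (gb : nat -> 'cV[R]_n) (H : nat -> 'M[R]_n)
  (x d : nat -> 'cV[R]_n) (y : nat -> 'cV[R]_m) (tau xi alpha : nat -> R).
Hypotheses (run : alg3_run c J L Gamma tau_m1 eps sigma xi_m1 theta beta
                    gb H x d y tau xi alpha)
  (eps_in : 0 < eps < 1) (sigma_in : 0 < sigma < 1) (tau_m1_gt0 : 0 < tau_m1)
  (H_null_psd : forall k (u : 'cV[R]_n), J (x k) *m u = 0 -> 0 <= quadf (H k) u).

Let trial k := tau_trial c sigma (x k) (gb k) (H k) (d k).

Lemma alg3_trial_gt0 k t : trial k = Some t -> 0 < t.
Proof.
have [dual [primal _]] := run k.
by apply: (tau_trial_gt0 dual primal (@H_null_psd k)); case/andP: sigma_in.
Qed.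

Lemma alg3_tau_rec k : tau k = tau_update eps (Defs.prev tau_m1 tau k) (trial k).
Proof. by have [_ [_ [-> _]]] := run k. Qed.

Lemma alg3_tau_gt0 k : 0 < tau k.
Proof.
elim: k => [|k IHk]; rewrite alg3_tau_rec tau_update_gt0 //; exact: alg3_trial_gt0.
Qed.

Lemma alg3_prev_tau_gt0 k : 0 < Defs.prev tau_m1 tau k.
Proof. by case: k => [|k] //=; apply: alg3_tau_gt0. Qed.

Lemma alg3_tau_le_m1 k : tau k <= tau_m1.
Proof.
elim: k => [|k IHk]; rewrite alg3_tau_rec; last apply: le_trans IHk.
all: by rewrite tau_update_le_prev ?alg3_prev_tau_gt0 //; apply: alg3_trial_gt0.
Qed.

Lemma alg3_Delta_q_ge k :
  tau k * Num.max (quadf (H k) (d k)) 0 / 2 + sigma * norm1 (c (x k)) <=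
  Delta_q c (x k) (tau k) (gb k) (H k) (d k).
Proof.
apply: Delta_q_ge_of_le_trial; first exact: ltW (alg3_tau_gt0 k).
  by case/andP: sigma_in => _ /ltW.
move=> t trial_t; rewrite alg3_tau_rec tau_update_le_trial ?alg3_prev_tau_gt0 //.
exact: alg3_trial_gt0.
Qed.

Section XiTrialBound.
Variables (kap zeta smin Bc : R).
Hypotheses (H_sym : forall k, (H k)^T = H k)
  (H_bounded : forall k (u : 'cV[R]_n), norm2 (H k *m u) <= kap * norm2 u)
  (H_null_pd : forall k (u : 'cV[R]_n),
     J (x k) *m u = 0 -> zeta * norm2 u ^+ 2 <= quadf (H k) u)
  (zeta_gt0 : 0 < zeta) (smin_gt0 : 0 < smin)
  (J_sing : forall k (w : 'cV[R]_m), smin * norm2 w <= norm2 ((J (x k))^T *m w))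
  (c_bounded : forall k, norm2 (c (x k)) <= Bc) (d_neq0 : forall k, d k != 0).

Lemma alg3_xi_trial_ge k : xi_trial_lb kap zeta smin Bc tau_m1 sigma <=
  Delta_q c (x k) (tau k) (gb k) (H k) (d k) / (tau k * norm2 (d k) ^+ 2).
Proof.
have [sigma_gt0 _] := andP sigma_in.
have [_ [primal _]] := run k.
have dd_le := step_sqnorm_le (H_sym k) (@H_bounded k) (@H_null_pd k) zeta_gt0 smin_gt0
  (@J_sing k) primal (c_bounded k).
have Dq_ge := alg3_Delta_q_ge k.
have tau_gt0 := alg3_tau_gt0 k; have tau_le := alg3_tau_le_m1 k.
have Bc_ge0 : 0 <= Bc := le_trans (norm2_ge0 _) (c_bounded k).
have S_ge0 := step_const_ge0 kap smin zeta_gt0 Bc_ge0.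
have := xi_trial_lb_gt0 kap smin zeta_gt0 Bc_ge0 (ltW tau_m1_gt0) sigma_gt0.
rewrite norm2_sqr ler_pdivlMr ?mulr_gt0 ?dotvv_gt0 // /xi_trial_lb invr_gt0 => Mc_gt0.
rewrite ler_pdivrMl // mulrDl.
set Dq := Delta_q _ _ _ _ _ _ in Dq_ge *; set M := Num.max _ _ in dd_le Dq_ge *.
set C := norm1 _ in dd_le Dq_ge *; set S := step_const _ _ _ _ in dd_le S_ge0 *.
have M_ge0 : 0 <= M by rewrite le_max lexx orbT.
have C_ge0 : 0 <= C := norm1_ge0 _.
(* tau |d|^2 <= (8/zeta) (tau M/2) + (S tau_m1/sigma) (sigma C), and both brackets
   are at most Dq. *)
have tau_dd_le : tau k * dotv (d k) (d k) <= tau k * (4 / zeta * M + S * C).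
  by rewrite ler_wpM2l // ltW.
have tau_C_le : S * C * tau k <= S * C * tau_m1.
  by apply: ler_wpM2l => //; apply: mulr_ge0.
have e1 : tau k * (4 / zeta * M + S * C) = 8 / zeta * (tau k * M / 2) + S * C * tau k.
  by field; rewrite gt_eqF.
have e2 : S * C * tau_m1 = S * tau_m1 / sigma * (sigma * C) by field; rewrite gt_eqF.
have sigma_C_ge0 : 0 <= sigma * C by rewrite mulr_ge0 // ltW.
have tau_M_ge0 : 0 <= tau k * M / 2 by rewrite divr_ge0 // mulr_ge0 // ltW.
have curv_le : 8 / zeta * (tau k * M / 2) <= 8 / zeta * Dq.
  by apply: ler_wpM2l; [rewrite divr_ge0 // ltW | lra].
have infeas_le : S * tau_m1 / sigma * (sigma * C) <= S * tau_m1 / sigma * Dq.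
  apply: ler_wpM2l; last lra.
  by apply: divr_ge0; [apply: mulr_ge0 => //; apply: ltW | apply: ltW].
lra.
Qed.

End XiTrialBound.

End Algorithm3Run.

Theorem lemma3p4 (R : realType) (n m : nat)
  (X : set 'cV[R]_n) (f : 'cV[R]_n -> R) (gradf : 'cV[R]_n -> 'cV[R]_n)
  (c : 'cV[R]_n -> 'cV[R]_m) (J : 'cV[R]_n -> 'M[R]_(m, n))
  (L : R) (gam : 'I_m -> R) (kappaH zeta : R)
  (tau_m1 eps sigma xi_m1 theta : R) (beta : nat -> R) :
  (* Standing Assumption *)
  open X -> convex_set X ->
  (forall x, X x -> differentiable f x /\ forall v, 'D_v f x = dotv (gradf x) v) ->
  {within X, continuous gradf} ->
  (exists fmin : R, forall x, X x -> fmin <= f x) ->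
  (exists Bg : R, forall x, X x -> norm2 (gradf x) <= Bg) ->
  (forall x z, X x -> X z -> norm2 (gradf x - gradf z) <= L * norm2 (x - z)) ->
  (forall x, X x -> differentiable c x /\ forall v, 'D_v c x = J x *m v) ->
  (exists Bc : R, forall x, X x -> norm2 (c x) <= Bc) ->
  (exists BJ : R, forall x, X x -> norm2 (J x) <= BJ) ->
  (forall i x z, X x -> X z ->
     norm2 (row i (J x) - row i (J z)) <= gam i * norm2 (x - z)) ->
  (exists smin : R, 0 < smin /\
     forall x (w : 'cV[R]_m), X x -> smin * norm2 w <= norm2 ((J x)^T *m w)) ->
  (* Matrix Assumption constants *)
  0 < zeta ->
  (* Algorithm inputs *)
  0 < tau_m1 -> 0 < eps < 1 -> 0 < sigma < 1 -> 0 < xi_m1 ->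
  (forall k, 0 < beta k <= 1) -> 0 <= theta ->
  exists xi_min : R, 0 < xi_min /\
  forall (gb : nat -> 'cV[R]_n) (H : nat -> 'M[R]_n)
         (x d : nat -> 'cV[R]_n) (y : nat -> 'cV[R]_m) (tau xi alpha : nat -> R),
    (forall k, X (x k)) ->
    (* Matrix Assumption along the run *)
    (forall k, (H k)^T = H k /\
       (forall u : 'cV[R]_n, norm2 (H k *m u) <= kappaH * norm2 u) /\
       (forall u : 'cV[R]_n, J (x k) *m u = 0 -> zeta * norm2 u ^+ 2 <= quadf (H k) u)) ->
    (forall k, d k != 0) ->
    alg3_run c J L (\sum_i gam i) tau_m1 eps sigma xi_m1 theta beta gb H x d y tau xi alpha ->
    exists (kxi : nat) (xib_min : R),
      xi_min <= xib_min <= xi_m1 /\ forall k, (kxi <= k)%N -> xi k = xib_min.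
Proof.
move=> _ _ _ _ _ _ _ _ [Bc c_bounded] _ _ [smin [smin_gt0 J_sing]] zeta_gt0
  tau_m1_gt0 eps_in sigma_in xi_m1_gt0 _ _.
have [sigma_gt0 _] := andP sigma_in.
have Bc_ge0 : 0 <= Num.max Bc 0 by rewrite le_max lexx orbT.
pose xi_lb := xi_trial_lb kappaH zeta smin (Num.max Bc 0) tau_m1 sigma.
have xi_lb_gt0 : 0 < xi_lb :=
  xi_trial_lb_gt0 kappaH smin zeta_gt0 Bc_ge0 (ltW tau_m1_gt0) sigma_gt0.
exists (Num.min xi_m1 ((1 - eps) * xi_lb)).
split; first by rewrite lt_min xi_m1_gt0 mulr_gt0 // subr_gt0; case/andP: eps_in.
move=> gb H x d y tau xi alpha x_in H_asm d_neq0 run.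
have H_null_psd k (u : 'cV[R]_n) : J (x k) *m u = 0 -> 0 <= quadf (H k) u.
  move=> Ju0; apply: le_trans ((H_asm k).2.2 u Ju0).
  by rewrite mulr_ge0 ?sqr_ge0 // ltW.
have c_bounded' k : norm2 (c (x k)) <= Num.max Bc 0.
  by rewrite (le_trans (c_bounded _ (x_in k))) // le_max lexx.
have xi_rec k : xi k = xi_update eps (Defs.prev xi_m1 xi k)
    (Delta_q c (x k) (tau k) (gb k) (H k) (d k) / (tau k * norm2 (d k) ^+ 2)).
  by have [_ [_ [_ [-> _]]]] := run k.
have [kxi [xi_kxi xi_const]] := xi_update_seq_eventually_const eps_in xi_m1_gt0 xi_lb_gt0
  (alg3_xi_trial_ge run eps_in sigma_in tau_m1_gt0 H_null_psd
     (fun k => (H_asm k).1) (fun k => (H_asm k).2.1) (fun k => (H_asm k).2.2)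
     zeta_gt0 smin_gt0 (fun k => J_sing (x k) ^~ (x_in k)) c_bounded' d_neq0) xi_rec.
by exists kxi, (xi kxi).
Qed.
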